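(* Let $I$ be a nonempty open real interval, let $\varphi:I\to\mathbb{R}$ be a strictly monotone function, let $f:I\to\mathbb{R}$ be an arbitrary function, and let $t\in\,]0,1[\,$. Assume that \[ \big(tf(x)+(1-t)f(y)\big)\varphi(tx+(1-t)y)=tf(x)\varphi(x)+(1-t)f(y)\varphi(y) \qquad\text{for all } x,y\in I. \] Then either $f$ is identically zero on $I$, or $f$ is nowhere zero on $I$, $f$ and $\varphi$ are infinitely many times differentiable on $I$, and there exists a nonzero constant $\gamma\in\mathbb{R}$ such that $f^2\varphi'=\gamma$ on $I$. *)

From Stdlib Require Import Reals.
From Coquelicot Require Import Coquelicot.
Open Scope R_scope.

Definition in_open_interval (a b : Rbar) (x : R) : Prop :=
  Rbar_lt a x /\ Rbar_lt x b.

Definition strictly_increasing_on (I : R -> Prop) (phi : R -> R) : Prop :=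
  forall x y, I x -> I y -> x < y -> phi x < phi y.
Definition strictly_decreasing_on (I : R -> Prop) (phi : R -> R) : Prop :=
  forall x y, I x -> I y -> x < y -> phi y < phi x.
Definition strictly_monotone_on (I : R -> Prop) (phi : R -> R) : Prop :=
  strictly_increasing_on I phi \/ strictly_decreasing_on I phi.

(* Infinitely differentiable on I (I open, so derivatives are local). *)
Definition smooth_on (I : R -> Prop) (g : R -> R) : Prop :=
  forall (n : nat) (x : R), I x -> ex_derive_n g n x.

From Stdlib Require Import Reals Lra Lia Classical.
From Coquelicot Require Import Coquelicot.
Open Scope R_scope.

(* The equation is linear in f and in phi, and since phi is injective, f
   either vanishes identically or nowhere, and then has constant sign; so we may assume
   phi increasing and f > 0.  With z = t x + (1 - t) y the equation reads
     t f(x) (phi z - phi x) = (1 - t) f(y) (phi y - phi z),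
   so f is a ratio of increments of phi.  This bounds f locally, which forces phi to be
   continuous (a jump at p would reproduce itself on infinitely many disjoint intervals
   near p), and makes f as regular as phi.  Integrating the equation over the pairs
   (x, y) of fixed mean z writes phi as a quotient of primitives of f and f phi, so phi
   gains one derivative; hence f and phi are smooth.  Differentiating the equation in x,
   then in y on the diagonal, gives 2 f' phi' + f phi'' = 0, i.e. (f^2 phi')' = 0, and
   f^2 phi' is not 0 since phi is strictly increasing. *)

Lemma locally_of_Rabs (x e : R) (P : R -> Prop) :
  0 < e -> (forall y, Rabs (y - x) < e -> P y) -> locally x P.
Proof. intros He H. exists (mkposreal e He). intros y Hy. apply H, Hy. Qed.

Lemma locally_Rabs (x : R) (P : R -> Prop) :
  locally x P -> exists e, 0 < e /\ forall y, Rabs (y - x) < e -> P y.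
Proof. intros [e H]. exists e. split; [apply cond_pos|]. intros y Hy. apply H, Hy. Qed.

Lemma continuous_affine (a b x : R) : continuous (fun y => a * y + b) x.
Proof. apply (ex_derive_continuous (V := R_NormedModule)). auto_derive. exact I. Qed.

Fixpoint Cn (n : nat) (g : R -> R) (x : R) : Prop :=
  match n with
  | O => continuous g x
  | S m => locally x (ex_derive g) /\ Cn m (Derive g) x
  end.

Lemma Cn_ext_loc n : forall g h x,
  locally x (fun y => g y = h y) -> Cn n g x -> Cn n h x.
Proof.
  induction n as [|n IH]; intros g h x Hgh Hg; simpl in *.
  - exact (continuous_ext_loc _ _ _ Hgh Hg).
  - destruct Hg as [Hd Hg]. split.
    + generalize (filter_and _ _ (locally_locally _ _ Hgh) Hd).
      apply filter_imp. intros y [Hy Hdy]. exact (ex_derive_ext_loc _ _ _ Hy Hdy).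
    + apply (IH (Derive g)); [|exact Hg].
      generalize (locally_locally _ _ Hgh). apply filter_imp. intros y Hy.
      exact (Derive_ext_loc _ _ _ Hy).
Qed.

Lemma Cn_pred n : forall g x, Cn (S n) g x -> Cn n g x.
Proof.
  induction n as [|n IH]; intros g x [Hd Hg]; simpl in *.
  - exact (ex_derive_continuous g x (locally_singleton _ _ Hd)).
  - split; [exact Hd | apply IH, Hg].
Qed.

Lemma Cn_le m n g x : (m <= n)%nat -> Cn n g x -> Cn m g x.
Proof. induction 1 as [|n _ IH]; [easy|]. intros Hn. apply IH, Cn_pred, Hn. Qed.

Lemma Cn_continuous n g x : Cn n g x -> continuous g x.
Proof. apply (Cn_le 0 n). lia. Qed.

Lemma Cn_ex_derive n g x : Cn (S n) g x -> ex_derive g x.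
Proof. intros [Hd _]. exact (locally_singleton _ _ Hd). Qed.

Lemma Cn_const n : forall c x, Cn n (fun _ => c) x.
Proof.
  induction n as [|n IH]; intros c x; simpl.
  - apply continuous_const.
  - split; [apply filter_forall; intros; apply ex_derive_const|].
    apply (Cn_ext_loc n (fun _ => 0)); [|apply IH].
    apply filter_forall. intros y. now rewrite Derive_const.
Qed.

Lemma Cn_plus n : forall g h x,
  Cn n g x -> Cn n h x -> Cn n (fun y => g y + h y) x.
Proof.
  induction n as [|n IH]; intros g h x Hg Hh; simpl in *.
  - exact (continuous_plus g h x Hg Hh).
  - destruct Hg as [Hg1 Hg2], Hh as [Hh1 Hh2].
    assert (Hgh := filter_and _ _ Hg1 Hh1). split.
    + revert Hgh. apply filter_imp. intros y [H1 H2]. exact (ex_derive_plus g h y H1 H2).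
    + apply (Cn_ext_loc n (fun y => Derive g y + Derive h y)); [|now apply IH].
      revert Hgh. apply filter_imp. intros y [H1 H2]. now rewrite Derive_plus.
Qed.

Lemma Cn_mult n : forall g h x,
  Cn n g x -> Cn n h x -> Cn n (fun y => g y * h y) x.
Proof.
  induction n as [|n IH]; intros g h x Hg Hh.
  - exact (continuous_mult g h x Hg Hh).
  - assert (Hg' := Cn_pred _ _ _ Hg). assert (Hh' := Cn_pred _ _ _ Hh).
    destruct Hg as [Hg1 Hg2], Hh as [Hh1 Hh2].
    assert (Hgh := filter_and _ _ Hg1 Hh1). split.
    + revert Hgh. apply filter_imp. intros y [H1 H2]. exact (ex_derive_mult g h y H1 H2).
    + apply (Cn_ext_loc n (fun y => Derive g y * h y + g y * Derive h y)).
      * revert Hgh. apply filter_imp. intros y [H1 H2]. now rewrite Derive_mult.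
      * apply Cn_plus; apply IH; assumption.
Qed.

Lemma Cn_scal n c g x : Cn n g x -> Cn n (fun y => c * g y) x.
Proof. intros H. apply Cn_mult; [apply Cn_const | exact H]. Qed.

Lemma Cn_minus n g h x : Cn n g x -> Cn n h x -> Cn n (fun y => g y - h y) x.
Proof.
  intros Hg Hh. apply Cn_plus; [exact Hg|].
  apply (Cn_ext_loc n (fun y => -1 * h y)); [|now apply Cn_scal].
  apply filter_forall. intros y. ring.
Qed.

Lemma Cn_inv n : forall g x, Cn n g x -> g x <> 0 -> Cn n (fun y => / g y) x.
Proof.
  induction n as [|n IH]; intros g x Hg Hx.
  - exact (continuous_Rinv_comp g x Hg Hx).
  - assert (Hg' := Cn_pred _ _ _ Hg).
    assert (Hnz : locally x (fun y => g y <> 0))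
      by exact (Cn_continuous _ _ _ Hg (fun u => u <> 0) (open_neq 0 (g x) Hx)).
    destruct Hg as [Hg1 Hg2].
    assert (Hloc := filter_and _ _ Hg1 Hnz). split.
    + revert Hloc. apply filter_imp. intros y [H1 H2]. exact (ex_derive_inv g y H1 H2).
    + apply (Cn_ext_loc n (fun y => - Derive g y * / g y * / g y)).
      * revert Hloc. apply filter_imp. intros y [H1 H2].
        rewrite Derive_inv by assumption. field. exact H2.
      * apply Cn_mult; [apply Cn_mult|]; try (apply IH; assumption).
        apply (Cn_ext_loc n (fun y => -1 * Derive g y)); [|now apply Cn_scal].
        apply filter_forall. intros y. ring.
Qed.

Lemma Cn_comp_affine n : forall g a b x,
  Cn n g (a * x + b) -> Cn n (fun y => g (a * y + b)) x.
Proof.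
  induction n as [|n IH]; intros g a b x Hg.
  - exact (continuous_comp (fun y => a * y + b) g x (continuous_affine a b x) Hg).
  - destruct Hg as [Hg1 Hg2].
    assert (Hl : locally x (fun y => ex_derive g (a * y + b)))
      by exact (continuous_affine a b x _ Hg1).
    split.
    + revert Hl. apply filter_imp. intros y Hy.
      apply (ex_derive_comp g (fun y => a * y + b)); [exact Hy|]. auto_derive. exact I.
    + apply (Cn_ext_loc n (fun y => a * Derive g (a * y + b))); [|now apply Cn_scal, IH].
      revert Hl. apply filter_imp. intros y Hy.
      rewrite (Derive_comp g (fun y => a * y + b)); [|exact Hy|auto_derive; exact I].
      replace (Derive (fun y => a * y + b) y) with a; [ring|].
      symmetry. apply is_derive_unique. auto_derive; [exact I | ring].
Qed.

Lemma Cn_S_of_is_derive n P g x :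
  locally x (fun y => is_derive P y (g y)) -> Cn n g x -> Cn (S n) P x.
Proof.
  intros HP Hg. split.
  - revert HP. apply filter_imp. intros y Hy. exists (g y). exact Hy.
  - apply (Cn_ext_loc n g); [|exact Hg].
    revert HP. apply filter_imp. intros y Hy. symmetry. exact (is_derive_unique _ _ _ Hy).
Qed.

Lemma ex_derive_n_of_Cn : forall n g x, (forall m, Cn m g x) -> ex_derive_n g n x.
Proof.
  induction n as [|[|n] IH]; intros g x H.
  - exact I.
  - exact (Cn_ex_derive 0 g x (H 1%nat)).
  - assert (H' : forall m, Cn m (Derive g) x) by (intros m; exact (proj2 (H (S m)))).
    specialize (IH (Derive g) x H'). simpl in IH |- *.
    eapply ex_derive_ext; [|exact IH]. intros y.
    change (Derive g) with (Derive_n g 1). rewrite Derive_n_comp.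
    now replace (n + 1)%nat with (S n) by lia.
Qed.

Definition is_interval (I : R -> Prop) : Prop :=
  forall x y w, I x -> I y -> x <= w <= y -> I w.

Lemma is_interval_segment I x y w :
  is_interval I -> I x -> I y -> Rmin x y <= w <= Rmax x y -> I w.
Proof.
  intros HI Hx Hy Hw. destruct (Rle_dec x y).
  - rewrite Rmin_left, Rmax_right in Hw by lra. exact (HI x y w Hx Hy Hw).
  - rewrite Rmin_right, Rmax_left in Hw by lra. exact (HI y x w Hy Hx Hw).
Qed.

Lemma is_interval_convex I s x y :
  is_interval I -> 0 <= s <= 1 -> I x -> I y -> I (s * x + (1 - s) * y).
Proof.
  intros HI Hs Hx Hy. apply (is_interval_segment I x y); auto.
  destruct (Rle_dec x y).
  - rewrite Rmin_left, Rmax_right by lra. nra.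
  - rewrite Rmin_right, Rmax_left by lra. nra.
Qed.

Lemma Rdiv_le_bounds (n d n1 n2 d1 d2 : R) :
  0 < n1 -> n1 <= n <= n2 -> 0 < d1 -> d1 <= d <= d2 -> n1 / d2 <= n / d <= n2 / d1.
Proof.
  intros Hn1 Hn Hd1 Hd. unfold Rdiv.
  assert (0 < / d2) by (apply Rinv_0_lt_compat; lra).
  assert (0 < / d) by (apply Rinv_0_lt_compat; lra).
  split; apply Rmult_le_compat; try lra; apply Rinv_le_contravar; lra.
Qed.

Lemma eq_of_is_derive_0 (h : R -> R) a b :
  (forall x, Rmin a b <= x <= Rmax a b -> is_derive h x 0) -> h a = h b.
Proof.
  intros H. destruct (MVT_gen h a b (fun _ => 0)) as [c [_ Hc]].
  - intros x Hx. apply H. lra.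
  - intros x Hx. apply continuity_pt_filterlim, (ex_derive_continuous (V := R_NormedModule)).
    exists 0. exact (H x Hx).
  - lra.
Qed.

Lemma constant_of_is_derive_0_on (I : R -> Prop) (h : R -> R) :
  is_interval I -> (forall x, I x -> is_derive h x 0) ->
  forall x y, I x -> I y -> h x = h y.
Proof.
  intros HI Hh x y Hx Hy. apply eq_of_is_derive_0. intros w Hw.
  exact (Hh w (is_interval_segment I x y w HI Hx Hy Hw)).
Qed.

Lemma lt_of_is_derive_pos (h dh : R -> R) a b : a < b ->
  (forall x, a <= x <= b -> is_derive h x (dh x) /\ 0 < dh x) -> h a < h b.
Proof.
  intros Hab H. destruct (MVT_gen h a b dh) as [c [Hc Hmvt]];
    rewrite Rmin_left, Rmax_right in * by lra.
  - intros x Hx. apply H. lra.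
  - intros x Hx. apply continuity_pt_filterlim, (ex_derive_continuous (V := R_NormedModule)).
    exists (dh x). apply H, Hx.
  - destruct (H c Hc) as [_ Hpos]. nra.
Qed.

Lemma is_derive_vanishing_on (I : R -> Prop) (g : R -> R) x l :
  open I -> I x -> (forall y, I y -> g y = 0) -> is_derive g x l -> l = 0.
Proof.
  intros HI Hx Hg Hd.
  assert (H0 : is_derive g x 0).
  { apply (is_derive_ext_loc (fun _ => 0)); [|apply (is_derive_const (V := R_NormedModule))].
    apply (locally_open I _ HI); [|exact Hx]. intros y Hy. now rewrite Hg. }
  rewrite <- (is_derive_unique _ _ _ Hd). exact (is_derive_unique _ _ _ H0).
Qed.

Lemma primitive_on (I : R -> Prop) (g : R -> R) w0 :
  open I -> is_interval I -> (forall w, I w -> continuous g w) -> I w0 ->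
  exists P, forall x, I x -> is_derive P x (g x).
Proof.
  intros HIo HIi Hg Hw0. exists (RInt g w0). intros x Hx.
  apply (is_derive_RInt g (RInt g w0) w0 x); [|exact (Hg x Hx)].
  apply (locally_open I _ HIo); [|exact Hx]. intros b Hb.
  apply (@RInt_correct R_CompleteNormedModule), (@ex_RInt_continuous R_CompleteNormedModule).
  intros z Hz. exact (Hg z (is_interval_segment I w0 b z HIi Hw0 Hb Hz)).
Qed.

Lemma primitive_Cn_on (I : R -> Prop) (g : R -> R) n w0 :
  open I -> is_interval I -> (forall w, I w -> Cn n g w) -> I w0 ->
  exists P, (forall x, I x -> is_derive P x (g x)) /\ forall x, I x -> Cn (S n) P x.
Proof.
  intros HIo HIi Hg Hw0.
  destruct (primitive_on I g w0 HIo HIi (fun w Hw => Cn_continuous n g w (Hg w Hw)) Hw0)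
    as [P HP].
  exists P. split; [exact HP|]. intros x Hx.
  exact (Cn_S_of_is_derive n P g x (locally_open I _ HIo HP x Hx) (Hg x Hx)).
Qed.

Lemma continuous_of_small_oscillation I (g : R -> R) p :
  is_interval I -> (forall x y, I x -> I y -> x <= y -> g x <= g y) ->
  (forall eta, 0 < eta ->
     exists d, 0 < d /\ I (p - d) /\ I (p + d) /\ g (p + d) - g (p - d) < eta) ->
  continuous g p.
Proof.
  intros HI Hg Hosc P HP. destruct (locally_Rabs _ _ HP) as [eta [Heta HPeta]].
  destruct (Hosc eta Heta) as (d & Hd & Hm & Hp & Hlt).
  change (locally p (fun y => P (g y))).
  apply (locally_of_Rabs p d); [exact Hd|]. intros y Hy. apply HPeta.
  apply Rabs_def2 in Hy.
  assert (Iy : I y) by (apply (HI (p - d) (p + d)); auto; lra).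
  assert (Ip : I p) by (apply (HI (p - d) (p + d)); auto; lra).
  assert (g (p - d) <= g y) by (apply Hg; auto; lra).
  assert (g y <= g (p + d)) by (apply Hg; auto; lra).
  assert (g (p - d) <= g p) by (apply Hg; auto; lra).
  assert (g p <= g (p + d)) by (apply Hg; auto; lra).
  apply Rabs_def1; lra.
Qed.

Lemma geometric_increments_bounded (h : R -> R) h0 r c a :
  0 < r < 1 -> 0 < c -> 0 < a -> (forall s, 0 < s <= a -> h0 <= h s) ->
  ~ (forall s, 0 < s <= a -> c <= h s - h (r * s)).
Proof.
  intros Hr Hc Ha Hlow Hinc.
  assert (Hpow : forall N, 0 < a * r ^ N <= a).
  { intros N. assert (0 < r ^ N) by (apply pow_lt; lra).
    assert (r ^ N <= 1) by (rewrite <- (pow1 N); apply pow_incr; lra). nra. }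
  assert (Hsum : forall N, INR N * c <= h a - h (a * r ^ N)).
  { induction N as [|N IH]; [simpl; rewrite Rmult_1_r; lra|].
    rewrite S_INR. specialize (Hinc _ (Hpow N)).
    replace (r * (a * r ^ N)) with (a * r ^ S N) in Hinc by (simpl; ring). lra. }
  destruct (INR_archimed c (h a - h0) Hc) as [N HN].
  specialize (Hsum N). specialize (Hlow _ (Hpow N)). lra.
Qed.

Definition regular_solution (I : R -> Prop) (phi f : R -> R) : Prop :=
  smooth_on I f /\ smooth_on I phi /\
  exists gamma, gamma <> 0 /\ forall x, I x -> f x ^ 2 * Derive phi x = gamma.

Section Normalized_solution.

Variables (I : R -> Prop) (t : R) (phi F : R -> R).
Hypothesis I_open : open I.
Hypothesis I_interval : is_interval I.
Hypothesis t_range : 0 < t < 1.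
Hypothesis phi_increasing : strictly_increasing_on I phi.
Hypothesis F_pos : forall x, I x -> 0 < F x.
Hypothesis solution : forall x y, I x -> I y ->
  (t * F x + (1 - t) * F y) * phi (t * x + (1 - t) * y)
  = t * F x * phi x + (1 - t) * F y * phi y.

Lemma phi_le x y : I x -> I y -> x <= y -> phi x <= phi y.
Proof. intros Hx Hy [Hxy|<-]; [left; apply phi_increasing | right]; auto. Qed.

Lemma I_ball x : I x -> exists e, 0 < e /\ forall y, Rabs (y - x) < e -> I y.
Proof. intros Hx. exact (locally_Rabs _ _ (I_open x Hx)). Qed.

Lemma I_mean x y : I x -> I y -> I (t * x + (1 - t) * y).
Proof. apply is_interval_convex; [exact I_interval | lra]. Qed.

Lemma solution_balance x y : I x -> I y ->
  t * F x * (phi (t * x + (1 - t) * y) - phi x)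
  = (1 - t) * F y * (phi y - phi (t * x + (1 - t) * y)).
Proof. intros Hx Hy. specialize (solution x y Hx Hy). lra. Qed.

Lemma F_ratio x y : I x -> I y -> x < y ->
  F y = t * F x * (phi (t * x + (1 - t) * y) - phi x)
        / ((1 - t) * (phi y - phi (t * x + (1 - t) * y))).
Proof.
  intros Hx Hy Hxy.
  assert (phi (t * x + (1 - t) * y) < phi y)
    by (apply phi_increasing; auto; [apply I_mean | nra]; auto).
  rewrite (solution_balance x y Hx Hy). field. lra.
Qed.

Lemma F_bounds_between x0 a b : I x0 -> I b -> x0 < a <= b -> t * x0 + (1 - t) * b < a ->
  exists m M, 0 < m /\ forall y, a <= y <= b -> m <= F y <= M.
Proof.
  intros Hx0 Hb Hab Hzb.
  set (z := fun y => t * x0 + (1 - t) * y).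
  assert (Iseg : forall y, x0 <= y <= b -> I y)
    by (intros y Hy; exact (I_interval x0 b y Hx0 Hb Hy)).
  assert (Iz : forall y, a <= y <= b -> I (z y)) by (intros y Hy; apply Iseg; unfold z; nra).
  assert (Ia : I a) by (apply Iseg; lra).
  assert (Ht0 : 0 < t * F x0) by (apply Rmult_lt_0_compat; [lra | exact (F_pos x0 Hx0)]).
  set (A1 := phi (z a) - phi x0). set (A2 := phi b - phi x0). set (D := phi a - phi (z b)).
  assert (HA1 : 0 < A1).
  { assert (phi x0 < phi (z a)) by (apply phi_increasing; auto; [apply Iz | unfold z]; nra).
    unfold A1. lra. }
  assert (HD : 0 < D).
  { assert (phi (z b) < phi a) by (apply phi_increasing; auto; apply Iz; lra).
    unfold D. lra. }
  exists (t * F x0 * A1 / ((1 - t) * A2)), (t * F x0 * A2 / ((1 - t) * D)).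
  split.
  { assert (phi (z a) <= phi b) by (apply phi_le; auto; [apply Iz | unfold z]; nra).
    apply Rdiv_lt_0_compat; apply Rmult_lt_0_compat; unfold A1, A2 in *; lra. }
  intros y Hy.
  assert (Iy : I y) by (apply Iseg; lra).
  assert (Izy : I (z y)) by (apply Iz, Hy).
  rewrite (F_ratio x0 y Hx0 Iy) by lra. fold (z y).
  assert (phi x0 <= phi (z y)) by (apply phi_le; auto; unfold z; nra).
  assert (phi (z a) <= phi (z y)) by (apply phi_le; auto; [apply Iz | unfold z]; nra).
  assert (phi (z y) <= phi (z b)) by (apply phi_le; auto; [apply Iz | unfold z]; nra).
  assert (phi (z y) <= phi b) by (apply phi_le; auto; unfold z; nra).
  assert (phi a <= phi y) by (apply phi_le; auto; lra).
  assert (phi y <= phi b) by (apply phi_le; auto; lra).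
  apply Rdiv_le_bounds; try split; unfold A1, A2, D in *;
    first [apply Rmult_lt_0_compat | apply Rmult_le_compat_l]; lra.
Qed.

Lemma F_local_bounds p : I p -> exists rho m M, 0 < rho /\ 0 < m /\
  forall y, p - rho <= y <= p + rho -> I y /\ m <= F y <= M.
Proof.
  intros Hp. destruct (I_ball p Hp) as [e [He HI]].
  set (rho := t * e / 8).
  assert (Hrho : 0 < rho < e / 8) by (unfold rho; split; nra).
  assert (Hin : forall y, p - e / 2 <= y <= p + rho -> I y)
    by (intros y Hy; apply HI, Rabs_def1; lra).
  destruct (F_bounds_between (p - e / 2) (p - rho) (p + rho)) as (m & M & Hm & HmM).
  - apply Hin. lra.
  - apply Hin. lra.
  - lra.
  - unfold rho. nra.
  - exists rho, m, M. repeat split; try lra; [apply Hin; lra | apply HmM; lra | apply HmM; lra].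
Qed.

Lemma phi_small_oscillation p : I p -> forall eta, 0 < eta ->
  exists d, 0 < d /\ I (p - d) /\ I (p + d) /\ phi (p + d) - phi (p - d) < eta.
Proof.
  intros Hp eta Heta.
  destruct (F_local_bounds p Hp) as (rho & m & M & Hrho & Hm & HF).
  apply NNPP. intros Hno.
  assert (Hjump : forall d, 0 < d <= rho -> eta <= phi (p + d) - phi (p - d)).
  { intros d Hd. apply Rnot_lt_le. intros Hlt. apply Hno. exists d.
    split; [lra|]. split; [apply HF; lra|]. split; [apply HF; lra | exact Hlt]. }
  assert (HmM : m <= M) by (destruct (HF p) as [_ HFp]; lra).
  (* Were phi to jump by eta at p, the pair x = p - s, y = p + k s, of mean p + t s,
     would force an increment c of phi on [p + t s, p + k s]; these intervals are
     disjoint for s = a r^N with r = (1 - t) / 2, since k r = t. *)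
  set (k := 2 * t / (1 - t)).
  assert (Hk : t < k) by (unfold k; apply Rlt_div_r; nra).
  set (a := rho / (k + 1)).
  assert (Ha : 0 < a /\ (k + 1) * a = rho)
    by (unfold a; split; [apply Rdiv_lt_0_compat | field]; lra).
  set (c := t * m * eta / ((1 - t) * M)).
  apply (geometric_increments_bounded (fun s => phi (p + k * s)) (phi p) ((1 - t) / 2) c a).
  - lra.
  - unfold c. apply Rdiv_lt_0_compat; apply Rmult_lt_0_compat; nra.
  - lra.
  - intros s Hs. apply phi_le; [apply HF; lra | apply HF; nra | nra].
  - intros s Hs. cbv beta.
    replace (p + k * ((1 - t) / 2 * s)) with (p + t * s) by (unfold k; field; lra).
    assert (Ix : I (p - s)) by (apply HF; nra).
    assert (Iy : I (p + k * s)) by (apply HF; nra).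
    assert (Hbal := solution_balance (p - s) (p + k * s) Ix Iy).
    replace (t * (p - s) + (1 - t) * (p + k * s)) with (p + t * s) in Hbal
      by (unfold k; field; lra).
    assert (Hj := Hjump (t * s) ltac:(nra)).
    assert (phi (p - s) <= phi (p - t * s))
      by (apply phi_le; [exact Ix | apply HF; nra | nra]).
    assert (phi (p + t * s) <= phi (p + k * s))
      by (apply phi_le; [apply HF; nra | exact Iy | nra]).
    destruct (HF (p - s)) as [_ [HFx _]]; [nra|].
    destruct (HF (p + k * s)) as [_ [_ HFy]]; [nra|].
    unfold c. apply Rle_div_l; [nra|].
    apply Rle_trans with (t * F (p - s) * (phi (p + t * s) - phi (p - s)));
      [apply Rmult_le_compat; nra|].
    rewrite Hbal.
    replace ((phi (p + k * s) - phi (p + t * s)) * ((1 - t) * M))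
      with ((1 - t) * M * (phi (p + k * s) - phi (p + t * s))) by ring.
    apply Rmult_le_compat_r; [lra|]. apply Rmult_le_compat_l; lra.
Qed.

Lemma phi_continuous p : I p -> continuous phi p.
Proof.
  intros Hp.
  exact (continuous_of_small_oscillation I phi p I_interval phi_le
           (phi_small_oscillation p Hp)).
Qed.

Lemma Cn_F_of_phi n : (forall w, I w -> Cn n phi w) -> forall y0, I y0 -> Cn n F y0.
Proof.
  intros Hphi y0 Hy0. destruct (I_ball y0 Hy0) as [e [He HI]].
  set (x0 := y0 - e / 2).
  assert (Ix0 : I x0) by (apply HI, Rabs_def1; unfold x0; lra).
  set (z := fun y => (1 - t) * y + t * x0).
  apply (Cn_ext_loc n
    (fun y => t * F x0 * (phi (z y) - phi x0) * / ((1 - t) * (phi y - phi (z y))))).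
  - apply (locally_of_Rabs y0 (e / 2)); [lra|]. intros y Hy.
    assert (Iy : I y) by (apply HI; lra).
    apply Rabs_def2 in Hy.
    rewrite (F_ratio x0 y Ix0 Iy) by (unfold x0; lra).
    unfold z, Rdiv. now replace ((1 - t) * y + t * x0) with (t * x0 + (1 - t) * y) by ring.
  - assert (Iz0 : I (z y0)).
    { unfold z. rewrite Rplus_comm. exact (I_mean x0 y0 Ix0 Hy0). }
    assert (phi (z y0) < phi y0) by (apply phi_increasing; auto; unfold z, x0; nra).
    apply Cn_mult;
      [apply Cn_mult; [apply Cn_const | apply Cn_minus; [|apply Cn_const]] | apply Cn_inv].
    + apply Cn_comp_affine, Hphi, Iz0.
    + apply Cn_scal, Cn_minus; [apply Hphi, Hy0 | apply Cn_comp_affine, Hphi, Iz0].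
    + apply Rmult_integral_contrapositive. split; lra.
Qed.

Let partner x z := (z - t * x) / (1 - t).

Let pair_increment (P : R -> R) x1 x2 z :=
  t * (P x2 - P x1) - (1 - t) ^ 2 / t * (P (partner x2 z) - P (partner x1 z)).

Lemma partner_mean x z : t * x + (1 - t) * partner x z = z.
Proof. unfold partner. field. lra. Qed.

(* Along the pairs (x, partner x z), whose mean is z, the x-derivative of Psi below is
   t F(x) phi(x) + (1 - t) F(u) phi(u) - phi(z) (t F(x) + (1 - t) F(u)) with
   u = partner x z, which vanishes by the equation; the factor (1 - t)^2 / t
   compensates du/dx = - t / (1 - t). *)
Lemma primitive_identity P Q x1 x2 z :
  (forall x, I x -> is_derive P x (F x)) ->
  (forall x, I x -> is_derive Q x (F x * phi x)) ->
  x1 <= x2 -> (forall x, x1 <= x <= x2 -> I x /\ I (partner x z)) ->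
  pair_increment Q x1 x2 z = phi z * pair_increment P x1 x2 z.
Proof.
  intros HP HQ Hx12 Hseg.
  set (Psi := fun x => t * Q x - (1 - t) ^ 2 / t * Q (partner x z)
                       - phi z * (t * P x - (1 - t) ^ 2 / t * P (partner x z))).
  assert (HPsi : Psi x1 = Psi x2).
  { apply eq_of_is_derive_0. intros x Hx. rewrite Rmin_left, Rmax_right in Hx by lra.
    destruct (Hseg x Hx) as [Ix Iu].
    assert (E := solution x _ Ix Iu). rewrite partner_mean in E.
    set (u := partner x z) in *.
    assert (DP : Derive (fun y => P y) x = F x) by exact (is_derive_unique _ _ _ (HP x Ix)).
    assert (DQ : Derive (fun y => Q y) x = F x * phi x)
      by exact (is_derive_unique _ _ _ (HQ x Ix)).
    assert (DPu : Derive (fun y => P y) ((z + - (t * x)) * / (1 - t)) = F u)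
      by exact (is_derive_unique _ _ _ (HP u Iu)).
    assert (DQu : Derive (fun y => Q y) ((z + - (t * x)) * / (1 - t)) = F u * phi u)
      by exact (is_derive_unique _ _ _ (HQ u Iu)).
    unfold Psi, partner. auto_derive.
    - repeat split; [exists (F x * phi x) | exists (F u * phi u) | exists (F x) | exists (F u)];
        first [apply HQ | apply HP]; assumption.
    - rewrite DP, DQ, DPu, DQu.
      transitivity (t * F x * phi x + (1 - t) * F u * phi u
                    - phi z * (t * F x + (1 - t) * F u));
        [field; lra | rewrite <- E; ring]. }
  unfold Psi, pair_increment in *. lra.
Qed.

Lemma primitive_F_increasing P : (forall x, I x -> is_derive P x (F x)) ->
  forall x y, I x -> I y -> x < y -> P x < P y.
Proof.
  intros HP x y Hx Hy Hxy. apply (lt_of_is_derive_pos P F x y Hxy). intros w Hw.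
  assert (Iw : I w) by exact (I_interval x y w Hx Hy Hw).
  split; [apply HP | apply F_pos]; exact Iw.
Qed.

Lemma pair_increment_pos P x1 x2 z : (forall x y, I x -> I y -> x < y -> P x < P y) ->
  x1 < x2 -> I x1 -> I x2 -> I (partner x1 z) -> I (partner x2 z) ->
  0 < pair_increment P x1 x2 z.
Proof.
  intros HP H12 I1 I2 Iu1 Iu2.
  assert (P x1 < P x2) by auto.
  assert (P (partner x2 z) < P (partner x1 z)).
  { apply HP; auto. unfold partner, Rdiv.
    apply Rmult_lt_compat_r; [apply Rinv_0_lt_compat; lra | nra]. }
  assert (0 < (1 - t) ^ 2 / t) by (apply Rdiv_lt_0_compat; nra).
  unfold pair_increment. nra.
Qed.

Lemma Cn_comp_partner n P x z : Cn n P (partner x z) -> Cn n (fun z => P (partner x z)) z.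
Proof.
  intros HP. apply (Cn_ext_loc n (fun z => P (/ (1 - t) * z + - t * x / (1 - t)))).
  - apply filter_forall. intros w. unfold partner. f_equal. field. lra.
  - apply Cn_comp_affine.
    replace (/ (1 - t) * z + - t * x / (1 - t)) with (partner x z)
      by (unfold partner; field; lra).
    exact HP.
Qed.

Lemma Cn_pair_increment n P x1 x2 z :
  Cn n P (partner x1 z) -> Cn n P (partner x2 z) -> Cn n (pair_increment P x1 x2) z.
Proof.
  intros H1 H2. unfold pair_increment. apply Cn_minus; [apply Cn_const|].
  apply Cn_scal, Cn_minus; apply Cn_comp_partner; assumption.
Qed.

(* Near z0, phi is the quotient of the two sides of primitive_identity, which are one
   derivative smoother than F and F phi. *)
Lemma phi_Cn_succ n : (forall w, I w -> Cn n phi w /\ Cn n F w) ->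
  forall z0, I z0 -> Cn (S n) phi z0.
Proof.
  intros Hn z0 Hz0.
  destruct (primitive_Cn_on I F n z0 I_open I_interval (fun w Hw => proj2 (Hn w Hw)) Hz0)
    as (P & HP & HPn).
  destruct (primitive_Cn_on I (fun y => F y * phi y) n z0 I_open I_interval
              (fun w Hw => Cn_mult n F phi w (proj2 (Hn w Hw)) (proj1 (Hn w Hw))) Hz0)
    as (Q & HQ & HQn).
  destruct (I_ball z0 Hz0) as [e [He HI]].
  set (d := e * (1 - t) / 4).
  assert (Hd : 0 < d) by (unfold d; nra).
  assert (Hseg : forall x z, z0 - d <= x <= z0 + d -> Rabs (z - z0) < d ->
                            I x /\ I (partner x z)).
  { intros x z Hx Hz. apply Rabs_def2 in Hz.
    assert (Hu : (1 - t) * (partner x z - z0) = (z - z0) - t * (x - z0))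
      by (unfold partner; field; lra).
    split; apply HI, Rabs_def1; unfold d in *; nra. }
  set (x1 := z0 - d). set (x2 := z0 + d).
  assert (Hincr : forall z, Rabs (z - z0) < d ->
            0 < pair_increment P x1 x2 z /\ I (partner x1 z) /\ I (partner x2 z)).
  { intros z Hz.
    destruct (Hseg x1 z) as [I1 Iu1]; [unfold x1; lra | exact Hz |].
    destruct (Hseg x2 z) as [I2 Iu2]; [unfold x2; lra | exact Hz |].
    repeat split; try assumption.
    apply pair_increment_pos; try assumption;
      [exact (primitive_F_increasing P HP) | unfold x1, x2; lra]. }
  assert (Hz0d : Rabs (z0 - z0) < d) by (rewrite Rminus_diag, Rabs_R0; exact Hd).
  apply (Cn_ext_loc (S n) (fun z => pair_increment Q x1 x2 z * / pair_increment P x1 x2 z)).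
  - apply (locally_of_Rabs z0 d _ Hd). intros z Hz.
    destruct (Hincr z Hz) as [Hpos _].
    rewrite (primitive_identity P Q x1 x2 z HP HQ); [field; lra | unfold x1, x2; lra |].
    intros x Hx. apply Hseg; [unfold x1, x2 in Hx; lra | exact Hz].
  - destruct (Hincr z0 Hz0d) as (Hpos & Iu1 & Iu2).
    apply Cn_mult; [apply Cn_pair_increment; apply HQn; assumption | apply Cn_inv; [|lra]].
    apply Cn_pair_increment; apply HPn; assumption.
Qed.

Lemma Cn_solution n : forall w, I w -> Cn n phi w /\ Cn n F w.
Proof.
  induction n as [|n IH]; intros w Hw.
  - split; [exact (phi_continuous w Hw) | exact (Cn_F_of_phi 0 phi_continuous w Hw)].
  - assert (HS : forall w, I w -> Cn (S n) phi w) by exact (phi_Cn_succ n IH).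
    split; [exact (HS w Hw) | exact (Cn_F_of_phi (S n) HS w Hw)].
Qed.

Lemma F_ex_derive x : I x -> ex_derive F x.
Proof. intros Hx. exact (Cn_ex_derive 0 F x (proj2 (Cn_solution 1 x Hx))). Qed.

Lemma phi_ex_derive x : I x -> ex_derive phi x.
Proof. intros Hx. exact (Cn_ex_derive 0 phi x (proj1 (Cn_solution 1 x Hx))). Qed.

Lemma Derive_phi_ex_derive x : I x -> ex_derive (Derive phi) x.
Proof. intros Hx. exact (Cn_ex_derive 0 _ x (proj2 (proj1 (Cn_solution 2 x Hx)))). Qed.

Lemma solution_dx x y : I x -> I y ->
  Derive F x * phi (t * x + (1 - t) * y)
  + (t * F x + (1 - t) * F y) * Derive phi (t * x + (1 - t) * y)
  = Derive F x * phi x + F x * Derive phi x.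
Proof.
  intros Hx Hy.
  assert (Hz := I_mean x y Hx Hy).
  assert (Hd : is_derive (fun x => (t * F x + (1 - t) * F y) * phi (t * x + (1 - t) * y)
                                   - t * F x * phi x - (1 - t) * F y * phi y) x
     (t * (Derive F x * phi (t * x + (1 - t) * y)
           + (t * F x + (1 - t) * F y) * Derive phi (t * x + (1 - t) * y)
           - (Derive F x * phi x + F x * Derive phi x)))).
  { auto_derive; [repeat split; auto using F_ex_derive, phi_ex_derive |].
    change (fun y => F y) with F. change (fun y => phi y) with phi. ring. }
  apply (is_derive_vanishing_on I _ x _ I_open Hx) in Hd; [nra|].
  intros w Hw. rewrite (solution w y Hw Hy). ring.
Qed.

Lemma solution_dxdy x : I x ->
  2 * Derive F x * Derive phi x + F x * Derive (Derive phi) x = 0.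
Proof.
  intros Hx.
  assert (Hxx : t * x + (1 - t) * x = x) by ring.
  assert (Hd : is_derive (fun y => Derive F x * phi (t * x + (1 - t) * y)
                          + (t * F x + (1 - t) * F y) * Derive phi (t * x + (1 - t) * y)
                          - (Derive F x * phi x + F x * Derive phi x)) x
     ((1 - t) * (2 * Derive F x * Derive phi x + F x * Derive (Derive phi) x))).
  { auto_derive; rewrite Hxx.
    - repeat split; auto using F_ex_derive, phi_ex_derive, Derive_phi_ex_derive.
    - change (fun y => F y) with F. change (fun y => phi y) with phi.
      change (fun y => Derive phi y) with (Derive phi). ring. }
  apply (is_derive_vanishing_on I _ x _ I_open Hx) in Hd; [nra|].
  intros w Hw. rewrite (solution_dx x w Hx Hw). ring.
Qed.

Lemma F_sq_Derive_phi_constant w0 : I w0 ->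
  exists gamma, gamma <> 0 /\ forall x, I x -> F x ^ 2 * Derive phi x = gamma.
Proof.
  intros Hw0.
  assert (HW : forall x y, I x -> I y -> F x ^ 2 * Derive phi x = F y ^ 2 * Derive phi y).
  { apply (constant_of_is_derive_0_on I (fun x => F x ^ 2 * Derive phi x) I_interval).
    intros x Hx.
    assert (Hd : is_derive (fun x => F x ^ 2 * Derive phi x) x
                   (F x * (2 * Derive F x * Derive phi x + F x * Derive (Derive phi) x))).
    { auto_derive; [repeat split; auto using F_ex_derive, Derive_phi_ex_derive|].
      change (fun y => F y) with F. change (fun y => Derive phi y) with (Derive phi). ring. }
    rewrite (solution_dxdy x Hx), Rmult_0_r in Hd. exact Hd. }
  exists (F w0 ^ 2 * Derive phi w0). split.
  - intros Hzero.
    destruct (I_ball w0 Hw0) as [e [He HI]].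
    assert (Iw1 : I (w0 + e / 2)) by (apply HI, Rabs_def1; lra).
    assert (phi w0 < phi (w0 + e / 2)) by (apply phi_increasing; auto; lra).
    assert (phi w0 = phi (w0 + e / 2)); [|lra].
    apply (constant_of_is_derive_0_on I phi I_interval); auto. intros x Hx.
    assert (Hx0 : F x ^ 2 * Derive phi x = 0) by (rewrite (HW x w0 Hx Hw0); exact Hzero).
    apply Rmult_integral in Hx0. destruct Hx0 as [Hx0|Hx0].
    + exfalso. exact (pow_nonzero _ 2 (Rgt_not_eq _ _ (F_pos x Hx)) Hx0).
    + rewrite <- Hx0. exact (Derive_correct _ _ (phi_ex_derive x Hx)).
  - intros x Hx. exact (HW x w0 Hx Hw0).
Qed.

Lemma normalized_solution_regular w0 : I w0 -> regular_solution I phi F.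
Proof.
  intros Hw0. split; [|split].
  - intros n x Hx. apply ex_derive_n_of_Cn. intros m. exact (proj2 (Cn_solution m x Hx)).
  - intros n x Hx. apply ex_derive_n_of_Cn. intros m. exact (proj1 (Cn_solution m x Hx)).
  - exact (F_sq_Derive_phi_constant w0 Hw0).
Qed.

End Normalized_solution.

Lemma smooth_on_scal_inv I s g : s <> 0 -> smooth_on I (fun x => s * g x) -> smooth_on I g.
Proof.
  intros Hs Hg n x Hx. apply (ex_derive_n_ext (fun y => / s * (s * g y))).
  - intros y. field. exact Hs.
  - apply ex_derive_n_scal_l, Hg, Hx.
Qed.

Lemma regular_solution_scal I phi f s1 s2 : s1 <> 0 -> s2 <> 0 ->
  regular_solution I (fun x => s1 * phi x) (fun x => s2 * f x) -> regular_solution I phi f.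
Proof.
  intros Hs1 Hs2 (Hf & Hphi & gamma & Hgamma & Hconst).
  split; [exact (smooth_on_scal_inv I s2 f Hs2 Hf)|].
  split; [exact (smooth_on_scal_inv I s1 phi Hs1 Hphi)|].
  exists (gamma / (s1 * s2 ^ 2)). split.
  - unfold Rdiv. apply Rmult_integral_contrapositive. split; [exact Hgamma|].
    apply Rinv_neq_0_compat, Rmult_integral_contrapositive. split; [exact Hs1|].
    exact (pow_nonzero _ 2 Hs2).
  - intros x Hx. rewrite <- (Hconst x Hx), Derive_scal. field. split; assumption.
Qed.

Lemma strictly_monotone_on_sign I (phi : R -> R) : strictly_monotone_on I phi ->
  exists s, s <> 0 /\ strictly_increasing_on I (fun x => s * phi x).
Proof.
  intros [Hinc|Hdec].
  - exists 1. split; [lra|]. intros x y Hx Hy Hxy. specialize (Hinc x y Hx Hy Hxy). lra.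
  - exists (-1). split; [lra|]. intros x y Hx Hy Hxy. specialize (Hdec x y Hx Hy Hxy). lra.
Qed.

Section Solution_sign.

Variables (I : R -> Prop) (t : R) (phi f : R -> R).
Hypothesis I_interval : is_interval I.
Hypothesis t_range : 0 < t < 1.
Hypothesis phi_monotone : strictly_monotone_on I phi.
Hypothesis solution : forall x y, I x -> I y ->
  (t * f x + (1 - t) * f y) * phi (t * x + (1 - t) * y)
  = t * f x * phi x + (1 - t) * f y * phi y.

Lemma phi_injective x y : I x -> I y -> x <> y -> phi x <> phi y.
Proof.
  intros Hx Hy Hxy. destruct (Rtotal_order x y) as [Hlt|[Heq|Hgt]]; [|contradiction|];
    destruct phi_monotone as [Hm|Hm];
    first [specialize (Hm x y Hx Hy Hlt) | specialize (Hm y x Hy Hx Hgt)]; lra.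
Qed.

Lemma phi_increments_same_sign x y : I x -> I y -> x < y ->
  0 < (phi (t * x + (1 - t) * y) - phi x) * (phi y - phi (t * x + (1 - t) * y)).
Proof.
  intros Hx Hy Hxy.
  assert (Hz := is_interval_convex I t x y I_interval ltac:(lra) Hx Hy).
  assert (x < t * x + (1 - t) * y < y) by nra.
  destruct phi_monotone as [Hm|Hm].
  - assert (phi x < phi (t * x + (1 - t) * y)) by (apply Hm; auto; lra).
    assert (phi (t * x + (1 - t) * y) < phi y) by (apply Hm; auto; lra). nra.
  - assert (phi (t * x + (1 - t) * y) < phi x) by (apply Hm; auto; lra).
    assert (phi y < phi (t * x + (1 - t) * y)) by (apply Hm; auto; lra). nra.
Qed.

Lemma solution_nowhere_zero x0 : I x0 -> f x0 <> 0 -> forall y, I y -> f y <> 0.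
Proof.
  intros Hx0 Hf0 y Hy Hfy.
  assert (E := solution y x0 Hy Hx0). rewrite Hfy in E.
  assert (Hyx : y <> x0) by (intros ->; contradiction).
  assert (Hz := is_interval_convex I t y x0 I_interval ltac:(lra) Hy Hx0).
  apply (phi_injective (t * y + (1 - t) * x0) x0 Hz Hx0).
  - intros Heq. apply Hyx. apply (Rmult_eq_reg_l t); [|lra]. lra.
  - apply (Rmult_eq_reg_l ((1 - t) * f x0)); [lra|].
    apply Rmult_integral_contrapositive. split; [lra | exact Hf0].
Qed.

Lemma solution_pair_same_sign x y : I x -> I y -> x < y -> f y <> 0 -> 0 < f x * f y.
Proof.
  intros Hx Hy Hxy Hfy.
  set (z := t * x + (1 - t) * y).
  assert (Hinc := phi_increments_same_sign x y Hx Hy Hxy). fold z in Hinc.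
  assert (Hbal : t * f x * (phi z - phi x) = (1 - t) * f y * (phi y - phi z))
    by (unfold z; specialize (solution x y Hx Hy); lra).
  assert (Hsq : 0 < (f y * (phi y - phi z)) ^ 2).
  { apply pow2_gt_0, Rmult_integral_contrapositive. split; [exact Hfy|].
    intros H0. rewrite H0, Rmult_0_r in Hinc. lra. }
  assert (E : t * (f x * f y) * ((phi z - phi x) * (phi y - phi z))
              = (1 - t) * (f y * (phi y - phi z)) ^ 2).
  { transitivity (t * f x * (phi z - phi x) * (f y * (phi y - phi z))); [ring|].
    rewrite Hbal. ring. }
  destruct (Rlt_le_dec 0 (f x * f y)) as [Hpos|Hneg]; [exact Hpos|].
  assert (Hle : t * (f x * f y) * ((phi z - phi x) * (phi y - phi z))
               <= 0 * ((phi z - phi x) * (phi y - phi z)))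
    by (apply Rmult_le_compat_r; nra).
  rewrite E, Rmult_0_l in Hle. nra.
Qed.

Lemma solution_same_sign x0 : I x0 -> f x0 <> 0 -> forall y, I y -> 0 < f x0 * f y.
Proof.
  intros Hx0 Hf0 y Hy. assert (Hfy := solution_nowhere_zero x0 Hx0 Hf0 y Hy).
  destruct (Rtotal_order x0 y) as [Hlt|[<-|Hgt]].
  - exact (solution_pair_same_sign x0 y Hx0 Hy Hlt Hfy).
  - nra.
  - rewrite Rmult_comm. exact (solution_pair_same_sign y x0 Hy Hx0 Hgt Hf0).
Qed.

End Solution_sign.

Lemma in_open_interval_open a b : open (in_open_interval a b).
Proof. exact (open_and _ _ (open_Rbar_gt a) (open_Rbar_lt b)). Qed.

Lemma in_open_interval_is_interval a b : is_interval (in_open_interval a b).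
Proof.
  intros x y w [Hxa Hxb] [Hya Hyb] Hw. split.
  - destruct a; simpl in *; lra.
  - destruct b; simpl in *; lra.
Qed.

Theorem theorem2p1 (a b : Rbar) (phi f : R -> R) (t : R) :
  Rbar_lt a b ->
  strictly_monotone_on (in_open_interval a b) phi ->
  0 < t < 1 ->
  (forall x y, in_open_interval a b x -> in_open_interval a b y ->
     (t * f x + (1 - t) * f y) * phi (t * x + (1 - t) * y)
     = t * f x * phi x + (1 - t) * f y * phi y) ->
  (forall x, in_open_interval a b x -> f x = 0) \/
  ((forall x, in_open_interval a b x -> f x <> 0) /\
   smooth_on (in_open_interval a b) f /\
   smooth_on (in_open_interval a b) phi /\
   exists gamma : R, gamma <> 0 /\
     forall x, in_open_interval a b x -> (f x) ^ 2 * Derive phi x = gamma).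
Proof.
  intros _ Hmono Ht Hsol.
  set (I := in_open_interval a b) in *.
  assert (HI : is_interval I) by apply in_open_interval_is_interval.
  destruct (classic (forall x, I x -> f x = 0)) as [Hzero|Hnz]; [left; exact Hzero | right].
  destruct (not_all_ex_not _ _ Hnz) as [x0 Hx0].
  destruct (imply_to_and _ _ Hx0) as [Ix0 Hfx0].
  split; [exact (solution_nowhere_zero I t phi f HI Ht Hmono Hsol x0 Ix0 Hfx0)|].
  destruct (strictly_monotone_on_sign I phi Hmono) as (s & Hs & Hinc).
  apply (regular_solution_scal I phi f s (f x0) Hs Hfx0).
  apply (normalized_solution_regular I t (fun x => s * phi x) (fun x => f x0 * f x)
           (in_open_interval_open a b) HI Ht Hinc) with (w0 := x0); [| |exact Ix0].
  - exact (solution_same_sign I t phi f HI Ht Hmono Hsol x0 Ix0 Hfx0).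
  - intros x y Hx Hy.
    transitivity (s * f x0 * ((t * f x + (1 - t) * f y) * phi (t * x + (1 - t) * y)));
      [ring | rewrite (Hsol x y Hx Hy); ring].
Qed.
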